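(* Let $A$ be a commutative ring and $\mathfrak{p}\subseteq A$ a prime ideal. If $A$ is totally $\sigma_{A\setminus\mathfrak{p}}$-artinian, then $\mathfrak{p}$ is a minimal prime ideal of $A$.
   Context: For a multiplicatively closed set $\Sigma\subseteq A$, $\sigma_\Sigma$ is the hereditary torsion theory with Gabriel filter $\mathcal{L}(\sigma_\Sigma)=\{\mathfrak{a}:\mathfrak{a}\cap\Sigma\ne\varnothing\}$. For a hereditary torsion theory $\tau$ with Gabriel filter $\mathcal{L}(\tau)$, $A$ is totally $\tau$-artinian if for every descending chain of ideals $\mathfrak{a}_1\supseteq\mathfrak{a}_2\supseteq\cdots$ there exist $m$ and $\mathfrak{h}\in\mathcal{L}(\tau)$ with $\mathfrak{a}_m\mathfrak{h}\subseteq\mathfrak{a}_s$ for all $s\ge m$. *)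

From mathcomp Require Import all_boot all_algebra.
Set Implicit Arguments. Unset Strict Implicit. Unset Printing Implicit Defensive.
Import GRing.Theory.
Local Open Scope ring_scope.

Section Ideals.
Variable A : comPzRingType.

Definition is_ideal (a : A -> Prop) : Prop :=
  [/\ a 0, (forall x y, a x -> a y -> a (x + y)) &
      (forall r x, a x -> a (r * x))].

Definition subI (a b : A -> Prop) : Prop := forall x, a x -> b x.

Definition ideal_mul (a b : A -> Prop) : A -> Prop :=
  fun z => exists s : seq (A * A),
    (forall p, p \in s -> a p.1 /\ b p.2) /\
    z = \sum_(p <- s) p.1 * p.2.

Definition is_prime_ideal (p : A -> Prop) : Prop :=
  [/\ is_ideal p, ~ p 1 & (forall x y, p (x * y) -> p x \/ p y)].

Definition is_minimal_prime (p : A -> Prop) : Prop :=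
  is_prime_ideal p /\
  (forall q, is_prime_ideal q -> subI q p -> subI p q).

Definition mult_closed (S : A -> Prop) : Prop :=
  S 1 /\ (forall x y, S x -> S y -> S (x * y)).

(* Gabriel filter of sigma_S: ideals meeting S. *)
Definition sigma_filter (S : A -> Prop) (a : A -> Prop) : Prop :=
  is_ideal a /\ exists s, a s /\ S s.

(* Totally tau-artinian, for tau given through its Gabriel filter L. *)
Definition totally_artinian (L : (A -> Prop) -> Prop) : Prop :=
  forall a : nat -> (A -> Prop),
    (forall n, is_ideal (a n)) ->
    (forall n, subI (a n.+1) (a n)) ->
    exists m, exists h, L h /\
      forall s, (m <= s)%N -> subI (ideal_mul (a m) h) (a s).

End Ideals.

From mathcomp Require Import all_boot all_algebra.
Set Implicit Arguments. Unset Strict Implicit. Unset Printing Implicit Defensive.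
Import GRing.Theory.
Local Open Scope ring_scope.

(* Write S = A \ p.  Given x in p, the principal ideals
   (x^n) form a descending chain; total sigma_S-artinianity yields m and
   an ideal h containing some t outside p with (x^m) h contained in
   (x^(m+1)).  Hence x^m t = r x^(m+1) for some r, i.e. x^m (t - r x) = 0,
   and t - r x lies outside p because t does while r x lies in p.  So
   every element of p is killed by a power of itself times an element
   outside p.  If q is a prime contained in p, then x^m (t - r x) = 0 lies
   in q while t - r x does not (it is not even in p), so x^m and hence x
   lie in q: thus p is contained in q, and p is minimal. *)

Section MinimalPrime.
Variable A : comPzRingType.

Lemma prime_pow (q : A -> Prop) (x : A) (n : nat) :
  is_prime_ideal q -> q (x ^+ n) -> q x.
Proof.
move=> [_ q1 qM]; elim: n => [|n IH]; first by rewrite expr0 => /q1.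
by rewrite exprS => /qM [].
Qed.

Lemma prime_sub_of_annihilated (p q : A -> Prop) (x u : A) (m : nat) :
  is_prime_ideal q -> subI q p -> ~ p u -> x ^+ m * u = 0 -> q x.
Proof.
move=> qprime qp pu xu0; have [[q0 _ _] _ qM] := qprime.
have : q (x ^+ m * u) by rewrite xu0.
by case/qM => [/(prime_pow qprime) // | /qp].
Qed.

Definition pow_ideal (x : A) (n : nat) : A -> Prop :=
  fun z => exists r, z = r * x ^+ n.

Lemma pow_ideal_is_ideal (x : A) (n : nat) : is_ideal (pow_ideal x n).
Proof.
split.
- by exists 0; rewrite mul0r.
- by move=> y z [r ->] [r' ->]; exists (r + r'); rewrite mulrDl.
- by move=> r y [r' ->]; exists (r * r'); rewrite mulrA.
Qed.

Lemma pow_ideal_decr (x : A) (n : nat) :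
  subI (pow_ideal x n.+1) (pow_ideal x n).
Proof. by move=> y [r ->]; exists (r * x); rewrite exprS mulrA. Qed.

Lemma ideal_mul_prod (a b : A -> Prop) (y z : A) :
  a y -> b z -> ideal_mul a b (y * z).
Proof.
move=> ay bz; exists [:: (y, z)]; split; last by rewrite big_seq1.
by move=> pr; rewrite inE => /eqP ->.
Qed.

Lemma artinian_annihilator (p : A -> Prop) (x : A) :
  is_ideal p -> totally_artinian (sigma_filter (fun y : A => ~ p y)) ->
  p x -> exists m u, ~ p u /\ x ^+ m * u = 0.
Proof.
move=> [_ pD pM] art px.
have [m [h [[_ [t [ht pt]]] stable]]] :=
  art _ (pow_ideal_is_ideal x) (@pow_ideal_decr x).
have [r xt] : pow_ideal x m.+1 (x ^+ m * t).
  apply: (stable m.+1 (leqnSn m)); apply: ideal_mul_prod ht.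
  by exists 1; rewrite mul1r.
exists m, (t - r * x); split.
- move=> ptrx; apply: pt; rewrite -(subrK (r * x) t).
  by apply: pD => //; apply: pM.
- by rewrite mulrBr xt exprSr mulrCA mulrA subrr.
Qed.

End MinimalPrime.

Theorem mainTheorem14 (A : comPzRingType) (p : A -> Prop) :
  is_prime_ideal p ->
  totally_artinian (sigma_filter (fun x : A => ~ p x)) ->
  is_minimal_prime p.
Proof.
move=> pprime art; split => // q qprime qp x px.
have [pI _ _] := pprime.
have [m [u [pu xu0]]] := artinian_annihilator pI art px.
exact: prime_sub_of_annihilated qprime qp pu xu0.
Qed.
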